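(* For real $p$, the inequalities $$\left( \frac{\sin x}{x}\right) ^{2p}+\left( \frac{\tan x}{x}\right)^{p}>\left( \frac{x}{\sin x}\right) ^{2p}+\left( \frac{x}{\tan x}\right)^{p}>2$$ hold for all $x\in(0,\pi/2)$ if and only if $p\geq \frac{\ln 2}{2(\ln \pi -\ln 2)}$. *)

From Stdlib Require Export Reals.
Open Scope R_scope.

From Stdlib Require Import Reals Lra Factorial List.
Import ListNotations.
Open Scope R_scope.

(* Write a = x / sin x and b = x / tan x, so that the inequalities read
   a^(-2p) + b^(-p) > a^(2p) + b^p > 2.  Since 1/u + 1/v > u + v iff uv < 1, and
   0 < a^2 b = x^3 cos x / sin^3 x < 1, the first one holds exactly when p > 0.
   By Bernoulli's inequality, u^q + v^q > 2 implies u^p + v^p > 2 whenever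
   0 < q <= p, so for p >= pcrit := ln 2 / (2 ln (PI/2)) the second one reduces
   to the exponent 3/4 on (0, 13/10] and to the exponent pcrit on (13/10, PI/2),
   where (PI/2)^(2 pcrit) = 2; both follow from Taylor bounds for sin and cos
   and a polynomial positivity certificate.  Conversely, as x -> PI/2 we have
   a -> PI/2 and b -> 0, so a^(2p) + b^p approaches (PI/2)^(2p) < 2 when
   0 < p < pcrit. *)

Lemma Rle_div_l a b c : 0 < c -> a <= b * c -> a / c <= b.
Proof.
  intros Hc H. apply Rmult_le_reg_r with c; [exact Hc|].
  unfold Rdiv. rewrite Rmult_assoc, Rinv_l; lra.
Qed.

Lemma Rle_div_r a b c : 0 < c -> a * c <= b -> a <= b / c.
Proof.
  intros Hc H. apply Rmult_le_reg_r with c; [exact Hc|].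
  unfold Rdiv. rewrite Rmult_assoc, Rinv_l; lra.
Qed.

Lemma ln_le_sub_1 u : 0 < u -> ln u <= u - 1.
Proof. intros Hu. pose proof (exp_ineq1_le (ln u)). rewrite exp_ln in *; lra. Qed.

Lemma Rpower_pos a r : 0 < Rpower a r.
Proof. apply exp_pos. Qed.

Lemma Rpower_Rinv a r : 0 < a -> Rpower (/ a) r = / Rpower a r.
Proof.
  intros Ha. unfold Rpower. rewrite ln_Rinv, <- exp_Ropp by exact Ha. f_equal; ring.
Qed.

Lemma Rpower_lt_1_iff t r : 0 < t < 1 -> (Rpower t r < 1 <-> 0 < r).
Proof.
  intros Ht. unfold Rpower. rewrite <- exp_0.
  assert (Hlnt : ln t < 0) by (rewrite <- ln_1; apply ln_increasing; lra).
  split; intros H.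
  - apply exp_lt_inv in H. nra.
  - apply exp_increasing. nra.
Qed.

Lemma Rle_Rpower_base_le1 t r s : 0 < t <= 1 -> r <= s -> Rpower t s <= Rpower t r.
Proof.
  intros Ht Hrs. unfold Rpower.
  assert (ln t <= 0).
  { destruct (Req_dec t 1) as [->|Ht1]; [rewrite ln_1; lra|].
    rewrite <- ln_1. left. apply ln_increasing; lra. }
  destruct (Req_dec (s * ln t) (r * ln t)) as [->|Hne]; [lra|].
  left. apply exp_increasing. nra.
Qed.

Lemma Rpower_ratio_gt a m n L : 0 < a -> n <> 0%nat ->
  L ^ n < a ^ m -> L < Rpower a (INR m / INR n).
Proof.
  intros Ha Hn HL. set (y := Rpower a (INR m / INR n)).
  assert (Hy : y ^ n = a ^ m).
  { unfold y. rewrite <- (Rpower_pow n) by apply Rpower_pos.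
    rewrite Rpower_mult, <- (Rpower_pow m a Ha). f_equal. field. now apply not_0_INR. }
  destruct (Rlt_le_dec L y) as [H|H]; [exact H|].
  pose proof (pow_incr y L n (conj (Rlt_le _ _ (Rpower_pos _ _)) H)). lra.
Qed.

Lemma Rpower_bernoulli y r : 0 < y -> 1 <= r -> 1 + r * (y - 1) <= Rpower y r.
Proof.
  intros Hy Hr. set (z := 1 + r * (y - 1)).
  destruct (Rle_lt_dec z 0) as [Hz|Hz]; [pose proof (Rpower_pos y r); lra|].
  (* ln z = ln y + ln (z/y) <= ln y + (r - 1)(1 - 1/y) <= r ln y, using ln u <= u - 1
     at u = z/y and at u = 1/y. *)
  assert (Hzy : ln z <= r * ln y).
  { assert (Hq : 0 < z / y) by (apply Rdiv_lt_0_compat; lra).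
    assert (Hinv : 1 - / y <= ln y).
    { pose proof (ln_le_sub_1 (/ y) ltac:(apply Rinv_0_lt_compat; lra)).
      rewrite ln_Rinv in *; lra. }
    replace z with (y * (z / y)) by (field; lra).
    rewrite ln_mult by lra.
    pose proof (ln_le_sub_1 (z / y) Hq).
    replace (z / y - 1) with ((r - 1) * (1 - / y)) in * by (unfold z; field; lra).
    nra. }
  unfold Rpower. rewrite <- (exp_ln z) at 1 by exact Hz.
  destruct (Req_dec (ln z) (r * ln y)) as [->|Hne]; [lra|].
  left. apply exp_increasing. lra.
Qed.

Lemma Rpower_sum_gt2_mono u v q p : 0 < q <= p ->
  Rpower u q + Rpower v q > 2 -> Rpower u p + Rpower v p > 2.
Proof.
  intros Hqp H. set (r := p / q).
  assert (Hr : 1 <= r) by (apply Rle_div_r; lra).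
  assert (Hp : forall w, Rpower w p = Rpower (Rpower w q) r).
  { intros w. rewrite Rpower_mult. f_equal. unfold r. field. lra. }
  rewrite !Hp.
  pose proof (Rpower_bernoulli (Rpower u q) r (Rpower_pos _ _) Hr).
  pose proof (Rpower_bernoulli (Rpower v q) r (Rpower_pos _ _) Hr).
  nra.
Qed.

Lemma Rinv_add_gt_add_iff u v : 0 < u -> 0 < v -> (/ u + / v > u + v <-> u * v < 1).
Proof.
  intros Hu Hv.
  replace (/ u + / v) with (u + v + (u + v) * (1 - u * v) / (u * v)) by (field; lra).
  assert (Huv : 0 < (u + v) / (u * v)) by (apply Rdiv_lt_0_compat; nra).
  replace ((u + v) * (1 - u * v) / (u * v)) with ((u + v) / (u * v) * (1 - u * v)) by (field; lra).
  split; intros H; nra.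
Qed.

Lemma INR_fact_S n : INR (fact (S n)) = INR (S n) * INR (fact n).
Proof. rewrite fact_simpl, mult_INR; reflexivity. Qed.

Ltac unfold_taylor :=
  unfold cos_approx, cos_term, sin_approx, sin_term;
  cbn [sum_f_R0 Nat.mul Nat.add]; repeat rewrite INR_fact_S; cbn [fact INR].

Lemma sin_ge_taylor3 x : 0 <= x <= 4 -> x - x^3/6 <= sin x.
Proof.
  intros Hx. destruct (pre_sin_bound x 0) as [H _]; try lra. revert H. unfold_taylor. lra.
Qed.

Lemma sin_le_taylor5 x : 0 <= x <= 4 -> sin x <= x - x^3/6 + x^5/120.
Proof.
  intros Hx. destruct (pre_sin_bound x 0) as [_ H]; try lra. revert H. unfold_taylor. lra.
Qed.

Lemma cos_ge_taylor2 x : -2 <= x <= 2 -> 1 - x^2/2 <= cos x.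
Proof.
  intros Hx. destruct (pre_cos_bound x 0) as [H _]; try lra. revert H. unfold_taylor. lra.
Qed.

Lemma cos_le_taylor4 x : -2 <= x <= 2 -> cos x <= 1 - x^2/2 + x^4/24.
Proof.
  intros Hx. destruct (pre_cos_bound x 0) as [_ H]; try lra. revert H. unfold_taylor. lra.
Qed.

Lemma cos_ge_taylor6 x : -2 <= x <= 2 -> 1 - x^2/2 + x^4/24 - x^6/720 <= cos x.
Proof.
  intros Hx. destruct (pre_cos_bound x 1) as [H _]; try lra. revert H. unfold_taylor. lra.
Qed.

Lemma PI_gt_314 : 157/50 < PI.
Proof.
  enough (157/100 < PI/2) by lra.
  apply PI2_lower_bound; [lra|].
  destruct (pre_cos_bound (157/100) 3) as [H _]; try lra. revert H. unfold_taylor. lra.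
Qed.

Lemma PI_lt_315 : PI < 63/20.
Proof.
  destruct (Rlt_le_dec (PI/2) (63/40)) as [H|H]; [lra|].
  pose proof (cos_ge_0 (63/40) ltac:(pose proof PI_RGT_0; lra) H).
  destruct (pre_cos_bound (63/40) 2) as [_ Hc]; try lra. revert Hc. unfold_taylor. lra.
Qed.

Definition pcrit := ln 2 / (2 * (ln PI - ln 2)).

Lemma ln_PI2 : ln (PI/2) = ln PI - ln 2.
Proof. unfold Rdiv. rewrite ln_mult, ln_Rinv; pose proof PI_RGT_0; lra. Qed.

Lemma ln_PI2_pos : 0 < ln (PI/2).
Proof. rewrite <- ln_1. apply ln_increasing; pose proof PI_gt_314; lra. Qed.

Lemma pcrit_ln_PI2 : 2 * pcrit * ln (PI/2) = ln 2.
Proof. pose proof ln_PI2_pos. rewrite ln_PI2 in *. unfold pcrit. field. lra. Qed.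

Lemma Rpower_PI2_pcrit : Rpower (PI/2) (2 * pcrit) = 2.
Proof. unfold Rpower. rewrite pcrit_ln_PI2. apply exp_ln. lra. Qed.

Lemma pcrit_bounds : 3/4 <= pcrit <= 77/100.
Proof.
  pose proof PI_gt_314. pose proof PI_lt_315. pose proof ln_PI2_pos. pose proof pcrit_ln_PI2.
  assert (Hln : forall a b, 0 < a <= b -> ln a <= ln b)
    by (intros a b [Ha [Hab|<-]]; [left; apply ln_increasing|]; lra).
  assert (Hup : ln ((PI/2)^3) <= ln (2^2)).
  { apply Hln. split; [apply pow_lt; lra|].
    apply Rle_trans with ((63/40)^3); [apply pow_incr|]; lra. }
  assert (Hlo : ln (2^50) <= ln ((PI/2)^77)).
  { apply Hln. split; [apply pow_lt; lra|].
    apply Rle_trans with ((157/100)^77); [lra|apply pow_incr; lra]. }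
  rewrite !ln_pow in Hup, Hlo by lra. cbn [INR] in Hup, Hlo. split; nra.
Qed.

Lemma x_cube_cos_lt_sin_cube x : 0 < x < PI/2 -> x^3 * cos x < sin x ^ 3.
Proof.
  intros Hx. pose proof PI_lt_315.
  pose proof (sin_ge_taylor3 x ltac:(lra)) as Hs.
  pose proof (cos_le_taylor4 x ltac:(lra)) as Hc.
  assert (H0 : 0 < x - x^3/6) by nra.
  assert ((x - x^3/6)^3 <= sin x ^ 3) by (apply pow_incr; lra).
  assert (x^3 * cos x <= x^3 * (1 - x^2/2 + x^4/24)) by (apply Rmult_le_compat_l; [apply pow_le|]; lra).
  assert (0 < x^7 * (1/24 - x^2/216)) by (apply Rmult_lt_0_compat; [apply pow_lt|]; nra).
  assert ((x - x^3/6)^3 - x^3 * (1 - x^2/2 + x^4/24) = x^7 * (1/24 - x^2/216)) by field.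
  lra.
Qed.

Lemma first_ineq_iff p x : 0 < x < PI/2 ->
  (Rpower (sin x / x) (2 * p) + Rpower (tan x / x) p >
     Rpower (x / sin x) (2 * p) + Rpower (x / tan x) p <-> 0 < p).
Proof.
  intros Hx. pose proof PI_lt_315.
  assert (Hs : 0 < sin x) by (apply sin_gt_0; lra).
  assert (Hc : 0 < cos x) by (apply cos_gt_0; lra).
  set (a := x / sin x). set (b := x / tan x).
  assert (Ha : 0 < a) by (apply Rdiv_lt_0_compat; lra).
  assert (Hb : b = x * cos x / sin x) by (unfold b, tan; field; lra).
  assert (Hb0 : 0 < b) by (rewrite Hb; apply Rdiv_lt_0_compat; nra).
  replace (sin x / x) with (/ a) by (unfold a; field; lra).
  replace (tan x / x) with (/ b) by (unfold b, tan; field; lra).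
  rewrite !Rpower_Rinv, Rinv_add_gt_add_iff by (auto; apply Rpower_pos).
  rewrite <- Rpower_mult, Rpower_mult_distr by (auto; apply Rpower_pos).
  replace 2 with (INR 2) at 1 by reflexivity. rewrite Rpower_pow by exact Ha.
  apply Rpower_lt_1_iff.
  pose proof (x_cube_cos_lt_sin_cube x Hx).
  replace (a ^ 2 * b) with (x^3 * cos x / sin x ^ 3) by (rewrite Hb; unfold a; field; lra).
  assert (Hs3 : 0 < sin x ^ 3) by (apply pow_lt; lra).
  assert (Hx3 : 0 < x ^ 3 * cos x) by (apply Rmult_lt_0_compat; [apply pow_lt|]; lra).
  split; [apply Rdiv_lt_0_compat; lra|].
  apply Rlt_le_trans with (sin x ^ 3 / sin x ^ 3).
  - apply Rmult_lt_compat_r; [apply Rinv_0_lt_compat|]; lra.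
  - right. field. lra.
Qed.

(* [bernstein y z [c_0; ...; c_n] = sum_k c_k y^k z^(n-k)]; with [z = c - d y], a list of
   nonnegative coefficients certifies nonnegativity on [0, c/d]. *)
Fixpoint bernstein (y z : R) (cs : list R) : R :=
  match cs with
  | [] => 0
  | c :: cs' => c * z ^ length cs' + y * bernstein y z cs'
  end.

Lemma bernstein_nonneg y z cs : 0 <= y -> 0 <= z -> Forall (Rle 0) cs -> 0 <= bernstein y z cs.
Proof.
  intros Hy Hz Hcs. induction Hcs as [|c cs Hc _ IH]; cbn [bernstein]; [lra|].
  pose proof (pow_le z (length cs) Hz). nra.
Qed.

Definition taylor32 (t : R) := 1 + 3/2 * t + 3/8 * t^2 - t^3/16.

Lemma taylor32_le_Rpower t : 0 <= t <= 12 -> taylor32 t <= Rpower (1 + t) (3/2).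
Proof.
  intros Ht. set (V := Rpower (1 + t) (3/2)).
  assert (HV : V ^ 2 = (1 + t) ^ 3).
  { unfold V. rewrite <- (Rpower_pow 2), Rpower_mult, <- (Rpower_pow 3) by (apply Rpower_pos || lra).
    f_equal. cbn. lra. }
  assert (0 < V) by apply Rpower_pos.
  assert ((1 + t) ^ 3 - taylor32 t ^ 2 = t^4 * (12 + 12 * t - t^2) / 256)
    by (unfold taylor32; field).
  assert (0 <= t^4 * (12 + 12 * t - t^2)) by (apply Rmult_le_pos; [apply pow_le|]; nra).
  nra.
Qed.

(* With y = x^2, [D / 120] and [C / 720] are the Taylor bounds for [sin x / x] and
   [cos x], and [W = 16 D^3 taylor32 ((120 - D) / D)]. *)
Definition region1_cert (y : R) :=
  let D := 120 - 20*y + y^2 in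
  let C := 720 - 360*y + 30*y^2 - y^3 in
  let W := 16*D^3 + 24*(120 - D)*D^2 + 6*(120 - D)^2*D - (120 - D)^3 in
  16^4 * 120^3 * C^3 * D^9 - 720^3 * (32*D^3 - W)^4.

Definition region1_coeffs : list R :=
  [838832100911584300236800000000000000;
   1711167345187359106688614400000000000000;
   1672041556377947462984773140480000000000000;
   1041527727586366544403824367370240000000000000;
   464342441623732857920398473381806080000000000000;
   157695554022168129062919497340747251712000000000000;
   42392703036452626972063353054128600042700800000000000;
   9253996817532244505263181160649518583749017600000000000;
   1669578049675678333873534678319058987671680450560000000000;
   252078449424382594537431105289342308190988303073280000000000;
   32130231672697122002637386240363987022696630332686336000000000;
   3477806870932361101975439644118629999861475305844637696000000000;
   320826254418387970069984075700588988757012462733795262464000000000;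
   25263367403216872439196530968644479499552726547583819841536000000000;
   1697604800666438428470289908765431538547361559121701015052615680000000;
   97130300836162270984843606301069445931538855660175161469813391360000000;
   4712103663079044996811940244152621825929022287978066578376151793664000000;
   192563500323878867005240152336726837254068230307609261138803223953408000000;
   6566680756513504165182356147362361345035733663052115851785730115852697600000;
   184423550246929919949849266596932009528500596981595960702253424899797811200000;
   4187886832997394737140007752689110277912208173094136493130968959281937203200000;
   74897712615439855101182969927164228810952409348863197929798315535560087592960000;
   1014380676998987301019897321992123386516134984724198931876784333857823083472384000;
   9766481727165976356021548385905787177220886216116006562377127493655686185256960000;
   59483045361099554905411940335503493438704366750511084582353680317333697984798720000;
   172024603223324955756133852609443885356922891504001718614990900525886623546966016000].

Lemma region1_cert_pos y : 0 < y <= 169/100 -> 0 < region1_cert y.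
Proof.
  intros Hy.
  assert (Hid : 3830224792147131369362629348887201408953937846517364173 * region1_cert y =
    y^2 * (3830224792147131369362629348887201408953937846517364173 * 10^32 +
           bernstein y (169 - 100*y) region1_coeffs))
    by (unfold region1_cert, region1_coeffs; cbn [bernstein length]; ring).
  assert (0 <= bernstein y (169 - 100*y) region1_coeffs).
  { apply bernstein_nonneg; try lra. unfold region1_coeffs. repeat (constructor; [lra|]). constructor. }
  assert (0 < y^2) by (apply pow_lt; lra).
  nra.
Qed.

Lemma region1_poly y : 0 < y <= 169/100 ->
  (2 - taylor32 ((20*y - y^2) / (120 - 20*y + y^2)))^4 <
    ((720 - 360*y + 30*y^2 - y^3) / (6 * (120 - 20*y + y^2)))^3.
Proof.
  intros Hy. pose proof (region1_cert_pos y Hy).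
  assert (HD : 0 < 120 - 20*y + y^2) by nra.
  assert (0 < region1_cert y / (120^3 * 216 * 16^4 * (120 - 20*y + y^2)^12))
    by (apply Rdiv_lt_0_compat; [lra|apply Rmult_lt_0_compat; [lra|apply pow_lt; lra]]).
  enough (((720 - 360*y + 30*y^2 - y^3) / (6 * (120 - 20*y + y^2)))^3 -
          (2 - taylor32 ((20*y - y^2) / (120 - 20*y + y^2)))^4 =
          region1_cert y / (120^3 * 216 * 16^4 * (120 - 20*y + y^2)^12)) by lra.
  unfold region1_cert, taylor32. field. lra.
Qed.

Lemma region1 x : 0 < x <= 13/10 ->
  Rpower (x / sin x) (3/2) + Rpower (x / tan x) (3/4) > 2.
Proof.
  intros Hx. pose proof PI_gt_314.
  set (y := x^2). assert (Hy : 0 < y <= 169/100) by (unfold y; split; nra).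
  set (D := 120 - 20*y + y^2). set (C := 720 - 360*y + 30*y^2 - y^3).
  set (t := (20*y - y^2) / D).
  assert (HD : 0 < D) by (unfold D; nra).
  assert (HC : 0 < C) by (unfold C; nra).
  assert (Ht : 0 <= t <= 12).
  { unfold t. split; [apply Rmult_le_pos; [nra|left; apply Rinv_0_lt_compat; lra]|].
    apply Rle_div_l; [lra|]. unfold D; nra. }
  assert (Hs : 0 < sin x) by (apply sin_gt_0; lra).
  assert (Hc : 0 < cos x) by (apply cos_gt_0; lra).
  assert (HsU : sin x <= x * (D / 120)).
  { replace (x * (D / 120)) with (x - x^3/6 + x^5/120) by (unfold D, y; field).
    apply sin_le_taylor5; lra. }
  assert (HcL : C / 720 <= cos x).
  { replace (C / 720) with (1 - x^2/2 + x^4/24 - x^6/720) by (unfold C, y; field).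
    apply cos_ge_taylor6; lra. }
  assert (Ha : 1 + t <= x / sin x).
  { replace (1 + t) with (120 / D) by (unfold t, D in *; field; lra).
    apply Rle_div_r; [lra|].
    apply Rle_trans with (120 / D * (x * (D / 120))); [|right; field; lra].
    apply Rmult_le_compat_l; [left; apply Rdiv_lt_0_compat|]; lra. }
  assert (Hb : C / (6 * D) <= x / tan x).
  { replace (x / tan x) with (x / sin x * cos x) by (unfold tan; field; lra).
    replace (C / (6 * D)) with ((1 + t) * (C / 720)) by (unfold t, D in *; field; lra).
    apply Rmult_le_compat; lra. }
  assert (HV : taylor32 t <= Rpower (x / sin x) (3/2)).
  { apply Rle_trans with (Rpower (1 + t) (3/2)); [now apply taylor32_le_Rpower|].
    apply Rle_Rpower_l; lra. }
  assert (HCD : 0 < C / (6 * D)) by (apply Rdiv_lt_0_compat; lra).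
  assert (HW : 2 - taylor32 t < Rpower (x / tan x) (3/4)).
  { replace (3/4) with (INR 3 / INR 4) by (cbn; field).
    apply Rpower_ratio_gt; [lra|discriminate|].
    apply Rlt_le_trans with ((C / (6 * D))^3); [now apply region1_poly|].
    apply pow_incr; lra. }
  lra.
Qed.

Definition region2_cert (e : R) :=
  25^5 * 3768^5 * (157 - 100*e)^4 * (6 - e^2)^4 * (24 - 12*e^2 + e^4)
  - 77^5 * 100^4 * 6^4 * 24 * e * (2400 - 1884*e + 157*e^3)^5.

Definition region2_coeffs : list R :=
  [140164613353067777804119777280000000000;
   78402626661260980272403084083200000000000;
   20469852526293118465707285330800640000000000;
   3309839110758171634460513500128870400000000000;
   370775221885631576866722341523841653760000000000;
   30492910079331022830205337488002587443200000000000;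
   1902951195485832720943936941757462322504499200000000;
   91831241158691893289486176257610598208634880000000000;
   3458717116382481257401890207957842918696635392000000000;
   101836991964044822289899392180702552481749975040000000000;
   2330858835596450126894363870607242041435514125568000000000;
   40902920189055806342992367993907844242509134725120000000000;
   536960927764566987685118594547604374737638030849216000000000;
   5060780780077765074732449810454161088192318135208960000000000;
   31905434290206870801835638703634752870656228141302016000000000;
   117539462875290536759234997463682267117485437543649280000000000;
   181388957032737575576418535043710476149091670683453094400000000].

Lemma region2_cert_pos e : 0 <= e <= 11/40 -> 0 < region2_cert e.
Proof.
  intros He.
  assert (Hid : 45949729863572161 * region2_cert e =
    45949729863572161 * 10^34 + bernstein e (11 - 40*e) region2_coeffs)
    by (unfold region2_cert, region2_coeffs; cbn [bernstein length]; ring).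
  assert (0 <= bernstein e (11 - 40*e) region2_coeffs).
  { apply bernstein_nonneg; try lra. unfold region2_coeffs. repeat (constructor; [lra|]). constructor. }
  lra.
Qed.

Lemma region2_poly e : 0 < e < 11/40 ->
  (77/25 * (1 - (1 - 100*e/157) / (1 - e^2/2 + e^4/24)))^5 <
    ((157/100 - e) * (e - e^3/6) / (1 - e^2/2 + e^4/24))^4.
Proof.
  intros He. pose proof (region2_cert_pos e ltac:(lra)).
  assert (HC : 0 < 24 - 12*e^2 + e^4) by nra.
  assert (0 < e^4 * 24^4 * region2_cert e / ((24 - 12*e^2 + e^4)^5 * (100^4 * 6^4 * 25^5 * 3768^5))).
  { apply Rdiv_lt_0_compat; [apply Rmult_lt_0_compat; [apply Rmult_lt_0_compat; [apply pow_lt|]|]|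
      apply Rmult_lt_0_compat; [apply pow_lt|]]; lra. }
  enough (((157/100 - e) * (e - e^3/6) / (1 - e^2/2 + e^4/24))^4 -
          (77/25 * (1 - (1 - 100*e/157) / (1 - e^2/2 + e^4/24)))^5 =
          e^4 * 24^4 * region2_cert e / ((24 - 12*e^2 + e^4)^5 * (100^4 * 6^4 * 25^5 * 3768^5)))
    by lra.
  unfold region2_cert. field. lra.
Qed.

(* As 2 pcrit <= 77/50, Bernoulli gives 2 w^(2 pcrit) >= 2 - 77/25 (1 - w), so it
   suffices that b^pcrit >= b^(4/5) > 77/25 (1 - w). *)
Lemma region2_reduced e w b : 0 < e < 11/40 ->
  (1 - 100*e/157) / (1 - e^2/2 + e^4/24) <= w <= 1 ->
  (157/100 - e) * (e - e^3/6) / (1 - e^2/2 + e^4/24) <= b <= 1 ->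
  2 * Rpower w (2 * pcrit) + Rpower b pcrit > 2.
Proof.
  intros He Hw Hb. pose proof pcrit_bounds.
  set (Cu := 1 - e^2/2 + e^4/24) in *.
  assert (HCu : 0 < Cu) by (unfold Cu; nra).
  assert (0 < (1 - 100*e/157) / Cu) by (apply Rdiv_lt_0_compat; lra).
  assert (0 < (157/100 - e) * (e - e^3/6) / Cu)
    by (apply Rdiv_lt_0_compat; [apply Rmult_lt_0_compat|]; nra).
  assert (Hwp : 1 + 77/50 * (w - 1) <= Rpower w (2 * pcrit)).
  { apply Rle_trans with (Rpower w (77/50)); [apply Rpower_bernoulli; lra|].
    apply Rle_Rpower_base_le1; lra. }
  assert (Hbp : 77/25 * (1 - w) < Rpower b pcrit).
  { apply Rlt_le_trans with (Rpower b (4/5)); [|apply Rle_Rpower_base_le1; lra].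
    replace (4/5) with (INR 4 / INR 5) by (cbn; field).
    apply Rpower_ratio_gt; [lra|discriminate|].
    apply Rle_lt_trans with ((77/25 * (1 - (1 - 100*e/157) / Cu))^5); [apply pow_incr; lra|].
    apply Rlt_le_trans with (((157/100 - e) * (e - e^3/6) / Cu)^4); [now apply region2_poly|].
    apply pow_incr; lra. }
  lra.
Qed.

Lemma region2 x : 13/10 < x < PI/2 ->
  Rpower (x / sin x) (2 * pcrit) + Rpower (x / tan x) pcrit > 2.
Proof.
  intros Hx. pose proof PI_gt_314. pose proof PI_lt_315.
  set (e := PI/2 - x). assert (He : 0 < e < 11/40) by (unfold e; lra).
  assert (Hxe : x = PI/2 - e) by (unfold e; ring).
  assert (Hsin : sin x = cos e) by (rewrite Hxe; apply sin_shift).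
  assert (Hcos : cos x = sin e) by (rewrite Hxe; apply cos_shift).
  assert (HcL : 1 - e^2/2 <= cos e) by (apply cos_ge_taylor2; lra).
  assert (HcU : cos e <= 1 - e^2/2 + e^4/24) by (apply cos_le_taylor4; lra).
  assert (HsL : e - e^3/6 <= sin e) by (apply sin_ge_taylor3; lra).
  assert (HsU : sin e < e) by (apply sin_lt_x; lra).
  assert (Hce : 0 < cos e) by nra.
  assert (Hse : 0 < sin e) by nra.
  set (w := x / (PI/2) / cos e).
  assert (Hw : 0 < w) by (unfold w; repeat apply Rdiv_lt_0_compat; lra).
  replace (x / sin x) with (PI/2 * w) by (unfold w; rewrite Hsin; field; lra).
  replace (x / tan x) with (x * sin e / cos e) by (unfold tan; rewrite Hsin, Hcos; field; split; lra).
  rewrite <- Rpower_mult_distr, Rpower_PI2_pcrit by lra.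
  apply (region2_reduced e); [exact He| split | split].
  - unfold w, Rdiv at 1 3. apply Rmult_le_compat; try lra.
    + left. apply Rinv_0_lt_compat. lra.
    + apply Rle_div_r; nra.
    + apply Rinv_le_contravar; lra.
  - unfold w. apply Rle_div_l; [lra|]. apply Rle_div_l; [lra|]. nra.
  - unfold Rdiv. apply Rmult_le_compat.
    + apply Rmult_le_pos; nra.
    + left. apply Rinv_0_lt_compat. nra.
    + apply Rmult_le_compat; nra.
    + apply Rinv_le_contravar; lra.
  - apply Rle_div_l; nra.
Qed.

Lemma second_ineq_of_ge p x : pcrit <= p -> 0 < x < PI/2 ->
  Rpower (x / sin x) (2 * p) + Rpower (x / tan x) p > 2.
Proof.
  intros Hp Hx. pose proof pcrit_bounds.
  rewrite <- Rpower_mult.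
  destruct (Rle_lt_dec x (13/10)) as [Hx1|Hx1].
  - apply Rpower_sum_gt2_mono with (3/4); [lra|].
    rewrite Rpower_mult. replace (2 * (3/4)) with (3/2) by field. apply region1; lra.
  - apply Rpower_sum_gt2_mono with pcrit; [lra|].
    rewrite Rpower_mult. apply region2; lra.
Qed.

Lemma exists_near_PI2 A B : PI/2 < A -> 0 < B ->
  exists x, 0 < x < PI/2 /\ x / sin x <= A /\ x / tan x <= B.
Proof.
  intros HA HB. pose proof PI_gt_314. pose proof PI_4.
  assert (HPA : A * (PI/2 / A) = PI/2) by (field; lra).
  set (e := Rmin (1/2) (Rmin (1 - PI/2 / A) (B/4))).
  assert (He : 0 < e <= 1/2).
  { assert (PI/2 / A < 1) by nra.
    unfold e. split; [repeat apply Rmin_glb_lt|apply Rmin_l]; lra. }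
  assert (HeA : e <= 1 - PI/2 / A) by (eapply Rle_trans; [apply Rmin_r|apply Rmin_l]).
  assert (HeB : e <= B/4) by (eapply Rle_trans; [apply Rmin_r|apply Rmin_r]).
  assert (Hc : 1 - e <= cos e) by (pose proof (cos_ge_taylor2 e ltac:(lra)); nra).
  assert (Hs : 0 < sin e < e) by (split; [apply sin_gt_0|apply sin_lt_x]; lra).
  exists (PI/2 - e).
  unfold tan. rewrite !sin_shift, !cos_shift.
  split; [lra|]. split.
  - apply Rle_div_l; nra.
  - replace ((PI/2 - e) / (cos e / sin e)) with ((PI/2 - e) * sin e / cos e) by (field; lra).
    apply Rle_div_l; nra.
Qed.

Lemma second_ineq_fails p : 0 < p < pcrit ->
  exists x, 0 < x < PI/2 /\ Rpower (x / sin x) (2 * p) + Rpower (x / tan x) p <= 2.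
Proof.
  intros Hp. pose proof PI_gt_314.
  set (M := Rpower (PI/2) (2 * p)).
  assert (HM : 0 < M < 2).
  { split; [apply Rpower_pos|]. rewrite <- Rpower_PI2_pcrit. apply Rpower_lt; lra. }
  assert (Hroot : forall u r, 0 < u -> r <> 0 -> Rpower (Rpower u (/ r)) r = u)
    by (intros u r Hu Hr; rewrite Rpower_mult, Rinv_l, Rpower_1; auto).
  set (A := Rpower ((M + 2) / 2) (/ (2 * p))).
  set (B := Rpower ((2 - M) / 2) (/ p)).
  assert (HA : PI/2 < A).
  { replace (PI/2) with (Rpower M (/ (2 * p)))
      by (unfold M; rewrite Rpower_mult, Rinv_r, Rpower_1; lra).
    apply Rlt_Rpower_l; [apply Rinv_0_lt_compat|]; lra. }
  destruct (exists_near_PI2 A B HA (Rpower_pos _ _)) as (x & Hx & Ha & Hb).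
  exists x. split; [exact Hx|].
  assert (Hs : 0 < sin x) by (apply sin_gt_0; lra).
  assert (Hc : 0 < cos x) by (apply cos_gt_0; lra).
  assert (Rpower (x / sin x) (2 * p) <= (M + 2) / 2).
  { rewrite <- (Hroot ((M + 2) / 2) (2 * p)) by lra.
    apply Rle_Rpower_l; [lra|]. split; [apply Rdiv_lt_0_compat; lra|exact Ha]. }
  assert (Rpower (x / tan x) p <= (2 - M) / 2).
  { rewrite <- (Hroot ((2 - M) / 2) p) by lra.
    apply Rle_Rpower_l; [lra|]. split; [|exact Hb].
    unfold tan. apply Rdiv_lt_0_compat; [|apply Rdiv_lt_0_compat]; lra. }
  lra.
Qed.

Theorem corollary4p10 (p : R) :
  (forall x : R, 0 < x < PI / 2 ->
     Rpower (sin x / x) (2 * p) + Rpower (tan x / x) p >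
       Rpower (x / sin x) (2 * p) + Rpower (x / tan x) p /\
     Rpower (x / sin x) (2 * p) + Rpower (x / tan x) p > 2)
  <-> p >= ln 2 / (2 * (ln PI - ln 2)).
Proof.
  change (ln 2 / (2 * (ln PI - ln 2))) with pcrit.
  pose proof pcrit_bounds as Hpcrit. pose proof PI2_1 as HPI.
  split.
  - intros H.
    assert (Hp : 0 < p) by (apply (first_ineq_iff p 1); [|apply H]; lra).
    destruct (Rlt_or_le p pcrit) as [Hlt|Hge]; [|lra].
    destruct (second_ineq_fails p (conj Hp Hlt)) as (x & Hx & Hle).
    specialize (H x Hx). lra.
  - intros Hp x Hx. split.
    + apply first_ineq_iff; lra.
    + apply second_ineq_of_ge; lra.
Qed.
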